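(* For $v\in\mathbb{C}$, $w\in\mathbb{C}\setminus\{1\}$ and integers $r\geq0$ define \begin{align*} U_r(w;v)&=\delta_{r,0}-\sum_{m=0}^{r}(-1)^m\binom{v}{r-m}\sum_{k=0}^{m}\frac{w}{(w-1)^{r+k+1}}\frac{(r+k)!}{k!}\mathcal{A}_{m,k}\!\left(\tfrac12,\tfrac13,\tfrac14,\dots\right),\\ \tilde U_r(w;v)&=-\sum_{m=0}^{r}\frac{v^{r-m}}{(r-m)!}\sum_{k=0}^{m}\frac{(-w)^k}{(w-1)^{r+k+1}}\frac{(r+k)!}{k!}\mathcal{A}_{m,k}\!\left(\tfrac1{2!},\tfrac1{3!},\tfrac1{4!},\dots\right). \end{align*} Then $U_0(w;v)=\tilde U_0(w;v)$ and $U_r(w;v)=\tilde U_r(w;v)+v\,\tilde U_{r-1}(w;v)$ for $r\geq1$.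
   Context: De Moivre polynomial $\mathcal{A}_{n,k}(a_1,a_2,\dots)$: coefficient of $x^n$ in $(a_1x+a_2x^2+\cdots)^k$ (so $\mathcal{A}_{0,0}=1$, $\mathcal{A}_{n,k}=0$ for $n<k$). $\binom{v}{j}=v(v-1)\cdots(v-j+1)/j!$; $\delta_{r,0}$ Kronecker delta. *)

From HB Require Import structures.
From mathcomp Require Import all_boot all_order all_algebra.
From mathcomp Require Import reals complex.
Set Implicit Arguments. Unset Strict Implicit. Unset Printing Implicit Defensive.
Import Order.TTheory GRing.Theory Num.Theory.
Local Open Scope ring_scope.

(* De Moivre polynomial A_{n,k}(a_1,a_2,...): coefficient of x^n in
   (a_1 x + a_2 x^2 + ...)^k.  Only a_1..a_n can contribute to the x^n
   coefficient, so the series is truncated at degree n. *)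
Definition deMoivre {F : comNzRingType} (a : nat -> F) (n k : nat) : F :=
  ((\sum_(1 <= i < n.+1) a i *: 'X^i) ^+ k)`_n.

Definition gbinom {F : fieldType} (v : F) (j : nat) : F :=
  (\prod_(i < j) (v - i%:R)) / (j`!)%:R.

Definition kdelta {F : nzRingType} (r : nat) : F := if r == 0%N then 1 else 0.

Section UDefs.
Variable F : fieldType.

Definition seq_inv (i : nat) : F := ((i.+1)%:R)^-1.
Definition seq_invfact (i : nat) : F := (((i.+1)`!)%:R)^-1.

Definition U (r : nat) (w v : F) : F :=
  kdelta r - \sum_(0 <= m < r.+1) (-1) ^+ m * gbinom v (r - m) *
    \sum_(0 <= k < m.+1) w / (w - 1) ^+ (r + k).+1 *
       (((r + k)`!)%:R / (k`!)%:R) * deMoivre seq_inv m k.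

Definition Utilde (r : nat) (w v : F) : F :=
  - \sum_(0 <= m < r.+1) v ^+ (r - m) / ((r - m)`!)%:R *
    \sum_(0 <= k < m.+1) (- w) ^+ k / (w - 1) ^+ (r + k).+1 *
       (((r + k)`!)%:R / (k`!)%:R) * deMoivre seq_invfact m k.
End UDefs.

From HB Require Import structures.
From mathcomp Require Import all_boot all_order all_algebra.
From mathcomp Require Import reals complex.
From mathcomp Require Import ring.
Set Implicit Arguments. Unset Strict Implicit. Unset Printing Implicit Defensive.
Import Order.TTheory GRing.Theory Num.Theory.
Local Open Scope ring_scope.

(* Both sides are Taylor coefficients.  As \sum_k (r+k)!/k! t^k = r!/(1-t)^{r+1}, the sums
   over De Moivre polynomials collapse to
     U_r = delta_{r,0} - w r! [x^r] (1+x)^v / (w - log(1+x)/x)^{r+1},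
     Utilde_r = - r! [x^r] e^{vx} Z^{r+1},   where Z = 1/B and B = w (e^x - 1)/x - 1.
   Lagrange's change of variables x := e^x - 1 turns the first formula into
     U_r = delta_{r,0} - r! [x^r] e^{vx} Z^{r+1} w e^x,
   and w e^x = B + 1 + x B'.  The term B + 1 contributes Utilde_r - r! [x^r] e^{vx} Z^r; the
   latter cancels delta_{0,0} when r = 0, and for r >= 1 it combines with the x B' term into
   v Utilde_{r-1}, by differentiating e^{vx} Z^r.  Power series are handled as polynomials
   compared modulo X^N. *)

(** * Power series modulo X^N *)

Definition eqmodX {R : nzRingType} (N : nat) (p q : {poly R}) :=
  forall i, (i < N)%N -> p`_i = q`_i.

Notation "p = q %[modX N ]" := (eqmodX N p q) : ring_scope.

Section CongruenceModX.
Variable R : comNzRingType.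
Implicit Types e p q s y z : {poly R}.

Lemma eqmodX_sym N p q : p = q %[modX N] -> q = p %[modX N].
Proof. by move=> pq i lt_iN; rewrite pq. Qed.

Lemma eqmodX_trans N p q s :
  p = q %[modX N] -> q = s %[modX N] -> p = s %[modX N].
Proof. by move=> pq qs i lt_iN; rewrite pq // qs. Qed.

Lemma eqmodX_le M N p q : (M <= N)%N -> p = q %[modX N] -> p = q %[modX M].
Proof. by move=> le_MN pq i lt_iM; rewrite pq // (leq_trans lt_iM). Qed.

Lemma eqmodX_add N p q p' q' :
  p = p' %[modX N] -> q = q' %[modX N] -> p + q = p' + q' %[modX N].
Proof. by move=> pp qq i lt_iN; rewrite !coefD pp // qq. Qed.

Lemma eqmodX_opp N p p' : p = p' %[modX N] -> - p = - p' %[modX N].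
Proof. by move=> pp i lt_iN; rewrite !coefN pp. Qed.

Lemma eqmodX_sub N p q p' q' :
  p = p' %[modX N] -> q = q' %[modX N] -> p - q = p' - q' %[modX N].
Proof. by move=> pp qq; apply/eqmodX_add/eqmodX_opp. Qed.

Lemma eqmodX_scale N c p p' : p = p' %[modX N] -> c *: p = c *: p' %[modX N].
Proof. by move=> pp i lt_iN; rewrite !coefZ pp. Qed.

Lemma eqmodX_muln N k p p' : p = p' %[modX N] -> p *+ k = p' *+ k %[modX N].
Proof. by move=> pp i lt_iN; rewrite !coefMn pp. Qed.

Lemma eqmodX_mul N p q p' q' :
  p = p' %[modX N] -> q = q' %[modX N] -> p * q = p' * q' %[modX N].
Proof.
move=> pp qq i lt_iN; rewrite !coefM; apply: eq_bigr => [[j /= le_ji]] _.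
by rewrite pp ?qq ?(leq_ltn_trans _ lt_iN) ?leq_subr.
Qed.

Lemma eqmodX_mull N s p p' : p = p' %[modX N] -> s * p = s * p' %[modX N].
Proof. exact: eqmodX_mul. Qed.

Lemma eqmodX_mulr N s p p' : p = p' %[modX N] -> p * s = p' * s %[modX N].
Proof. by move/eqmodX_mul; apply. Qed.

Lemma eqmodX_exp N k p p' : p = p' %[modX N] -> p ^+ k = p' ^+ k %[modX N].
Proof. by move=> pp; elim: k => [|k IHk] //; rewrite !exprS; apply: eqmodX_mul. Qed.

Lemma eqmodX_deriv N p q : p = q %[modX N.+1] -> p^`() = q^`() %[modX N].
Proof. by move=> pq i lt_iN; rewrite !coef_deriv pq. Qed.

Lemma eqmodX_mulXK N p q : 'X * p = 'X * q %[modX N.+1] -> p = q %[modX N].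
Proof. by move=> pq i lt_iN; have := pq i.+1 lt_iN; rewrite !coefXM. Qed.

Lemma coef_exp_lt q k i : q`_0 = 0 -> (i < k)%N -> (q ^+ k)`_i = 0.
Proof.
move=> q0; elim: k i => [//|k IHk] i lt_ik.
rewrite exprS coefM big1 // => [[[|j] /= le_ji]] _; first by rewrite q0 mul0r.
by rewrite IHk ?mulr0 // ltn_subLR // addSnnS (leq_trans lt_ik) // leq_addl.
Qed.

Lemma coef_comp_poly_lt N p q n : q`_0 = 0 -> (n < N)%N ->
  (p \Po q)`_n = \sum_(i < N) p`_i * (q ^+ i)`_n.
Proof.
move=> q0 lt_nN; rewrite coef_comp_poly.
have widen M : (M <= size p + N)%N -> \sum_(i < M) p`_i * (q ^+ i)`_n =
    \sum_(i < size p + N | (i < M)%N) p`_i * (q ^+ i)`_n.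
  exact: (big_ord_widen (size p + N) (fun i => p`_i * (q ^+ i)`_n)).
rewrite !widen ?leq_addr ?leq_addl // big_mkcond [RHS]big_mkcond.
apply: eq_bigr => i _.
case: ltnP => [lt_ip|le_pi]; case: ltnP => // le_Ni.
  by rewrite coef_exp_lt ?mulr0 // (leq_trans lt_nN).
by rewrite nth_default ?mul0r.
Qed.

Lemma coef0_comp_poly p q : q`_0 = 0 -> (p \Po q)`_0 = p`_0.
Proof. by move=> q0; rewrite -!horner_coef0 horner_comp [q.[0]]horner_coef0 q0. Qed.

Lemma eqmodX_comp N p q p' q' : q`_0 = 0 -> q'`_0 = 0 ->
  p = p' %[modX N] -> q = q' %[modX N] -> p \Po q = p' \Po q' %[modX N].
Proof.
move=> q0 q'0 pp qq n lt_nN; rewrite (coef_comp_poly_lt p q0 lt_nN).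
rewrite (coef_comp_poly_lt p' q'0 lt_nN); apply: eq_bigr => i _.
by rewrite pp // (eqmodX_exp i qq).
Qed.

Lemma eqmodX_compl N p p' q : q`_0 = 0 ->
  p = p' %[modX N] -> p \Po q = p' \Po q %[modX N].
Proof. by move=> q0 pp; apply: eqmodX_comp. Qed.

Lemma coef_comp_poly_NX p i : (p \Po - 'X)`_i = (-1) ^+ i * p`_i.
Proof.
have -> : p \Po - 'X = \poly_(j < size p) ((-1) ^+ j * p`_j).
  rewrite comp_polyE poly_def; apply: eq_bigr => j _.
  by rewrite -scaleN1r exprZn scalerA mulrC.
by rewrite coef_poly; case: ltnP => // le_pi; rewrite nth_default ?mulr0.
Qed.

Lemma eqmodX_mulIr N p z y y' : p * z = 1 %[modX N] ->
  y * p = y' * p %[modX N] -> y = y' %[modX N].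
Proof.
move=> pz yy; rewrite -[y]mulr1 -[y']mulr1.
apply: (eqmodX_trans (eqmodX_mull y (eqmodX_sym pz))).
apply: (eqmodX_trans _ (eqmodX_mull y' pz)).
by rewrite !mulrA; apply: eqmodX_mulr.
Qed.

Lemma eqmodX_inv_uniq N p z z' : p * z = 1 %[modX N] -> p * z' = 1 %[modX N] ->
  z = z' %[modX N].
Proof.
move=> pz pz'; apply: (eqmodX_mulIr pz); rewrite ![_ * p]mulrC.
exact: eqmodX_trans pz (eqmodX_sym pz').
Qed.

Lemma eqmodX_deriv_inv N p z : p * z = 1 %[modX N.+1] ->
  z^`() = - (z ^+ 2 * p^`()) %[modX N].
Proof.
move=> pz; have pzN := eqmodX_le (leqnSn N) pz.
have dpz : p * z^`() = - (p^`() * z) %[modX N].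
  move=> i lt_iN; have := eqmodX_deriv pz lt_iN.
  rewrite derivM -polyC1 derivC coefD coef0 coefN => /eqP.
  by rewrite addrC addr_eq0 => /eqP.
have zpz : z^`() = z * (p * z^`()) %[modX N].
  rewrite mulrCA mulrA -[X in X = _ %[modX N]]mul1r.
  exact/eqmodX_mulr/eqmodX_sym.
apply: (eqmodX_trans zpz); apply: (eqmodX_trans (eqmodX_mull z dpz)).
by rewrite mulrN expr2 mulrCA [p^`() * _]mulrC.
Qed.

Lemma eqmodX_deriv_mul_exp_inv N k c e p z : e^`() = c *: e %[modX N] ->
  p * z = 1 %[modX N.+1] ->
  (e * z ^+ k)^`() = c *: (e * z ^+ k) - e * z ^+ k.+1 * p^`() *+ k %[modX N].
Proof.
move=> de pz; rewrite derivM deriv_exp scalerAl.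
apply: eqmodX_add; first exact: eqmodX_mulr.
case: k => [|k] /=; first by rewrite !mulr0n mulr0 oppr0.
apply: eqmodX_trans (eqmodX_mull _ (eqmodX_muln _ (eqmodX_mulr _ (eqmodX_deriv_inv pz)))) _.
suff -> : e * (- (z ^+ 2 * p^`()) * z ^+ k *+ k.+1) = - (e * z ^+ k.+2 * p^`() *+ k.+1) by [].
by rewrite !exprS expr0; ring.
Qed.

Lemma eqmodX_mul_exp_inv N k p z y c : p * z = 1 %[modX N] ->
  y * p ^+ k = c%:P %[modX N] -> y = c *: z ^+ k %[modX N].
Proof.
move=> pz ypk; have pzk : p ^+ k * z ^+ k = 1 %[modX N].
  by rewrite -exprMn -(expr1n _ k); apply: eqmodX_exp.
apply: (eqmodX_mulIr pzk); apply: (eqmodX_trans ypk).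
rewrite -scalerAl mulrC -alg_polyC; exact/eqmodX_scale/eqmodX_sym.
Qed.
End CongruenceModX.

Section DeMoivre.
Variable R : comNzRingType.

Definition gseries (a : nat -> R) n : {poly R} := \sum_(1 <= i < n.+1) a i *: 'X^i.

Lemma coef_gseries a n j : (gseries a n)`_j = if (0 < j <= n)%N then a j else 0.
Proof.
have -> : gseries a n = \poly_(i < n.+1) (if i == 0%N then 0 else a i).
  rewrite /gseries poly_def big_ord_recl /= scale0r add0r big_add1 big_mkord.
  by apply: eq_bigr.
by rewrite coef_poly ltnS; case: j.
Qed.

Lemma coef0_gseries a n : (gseries a n)`_0 = 0.
Proof. by rewrite coef_gseries. Qed.

Lemma deMoivreE a m n k : (m <= n)%N -> deMoivre a m k = (gseries a n ^+ k)`_m.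
Proof.
move=> le_mn; apply: (eqmodX_exp k _ (ltnSn m)) => j; rewrite ltnS => le_jm.
by rewrite -/(gseries a m) !coef_gseries le_jm (leq_trans le_jm le_mn).
Qed.

Lemma sum_deMoivre a (f : nat -> R) m n : (m <= n)%N ->
  \sum_(0 <= k < m.+1) f k * deMoivre a m k =
    (\sum_(k < n.+1) f k *: gseries a n ^+ k)`_m.
Proof.
move=> le_mn; rewrite coef_sum big_mkord.
rewrite (big_ord_widen n.+1 (fun k => f k * deMoivre a m k)) // big_mkcond.
apply: eq_bigr => k _; rewrite coefZ; case: ltnP => [lt_km|le_mk].
  by rewrite (deMoivreE _ _ le_mn).
by rewrite coef_exp_lt ?coef0_gseries ?mulr0.
Qed.
End DeMoivre.

Section InverseModX.
Variable R : comUnitRingType.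
Implicit Types p q z : {poly R}.

Lemma eqmodX_inv_exists N p : p`_0 \is a GRing.unit ->
  exists z, p * z = 1 %[modX N].
Proof.
move=> p0_unit; set q := 1 - (p`_0)^-1 *: p.
have q0 : q`_0 = 0 by rewrite coefB coefZ coefC mulVr // subrr.
exists ((p`_0)^-1 *: \sum_(i < N) q ^+ i).
have -> : p * ((p`_0)^-1 *: \sum_(i < N) q ^+ i) = 1 - q ^+ N.
  rewrite -scalerAr scalerAl.
  have -> : (p`_0)^-1 *: p = - (q - 1) by rewrite opprB /q opprB addrC subrK.
  by rewrite mulNr -subrX1 opprB.
by move=> i lt_iN; rewrite coefB coef_exp_lt // subr0.
Qed.
End InverseModX.

Section CharacteristicZero.
Variable F : fieldType.
Hypothesis F_char0 : [pchar F] =i pred0.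
Implicit Types p q psi G H Z : {poly F}.

Lemma natf_neq0 n : n.+1%:R != 0 :> F.
Proof. by move/pcharf0P: F_char0 => ->. Qed.

Lemma natf_fact_neq0 n : n`!%:R != 0 :> F.
Proof. by move/pcharf0P: F_char0 => ->; rewrite -lt0n fact_gt0. Qed.

Lemma mulrSnI k : injective (fun x : F => x *+ k.+1).
Proof. by move=> x y /= xy; apply: (mulIf (natf_neq0 k)); rewrite !mulr_natr. Qed.

Lemma eqmodX_deriv_uniq N p q :
  p^`() = q^`() %[modX N] -> p`_0 = q`_0 -> p = q %[modX N.+1].
Proof.
by move=> dpq pq0 [//|i] lt_iN; apply: (@mulrSnI i); rewrite -!coef_deriv dpq.
Qed.

Lemma eqmodX_ode N c p q : p^`() = c *: p %[modX N] -> q^`() = c *: q %[modX N] ->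
  p`_0 = q`_0 -> p = q %[modX N.+1].
Proof.
move=> dp dq pq0 i; elim: i => [//|i IHi] lt_iN; apply: (@mulrSnI i).
by rewrite -!coef_deriv dp // dq // !coefZ IHi // ltnW.
Qed.

(** * Lagrange's change of variables *)

(* (X psi)' Z^{m+1} = psi Z Z^m + X psi' Z^{m+1}, and psi' Z^{m+1} agrees with -(Z^m)'/m up
   to order m, so for m > 0 the two x^m coefficients cancel. *)
Lemma lagrange_residue m psi Z : psi * Z = 1 %[modX m.+1] ->
  (('X * psi)^`() * Z ^+ m.+1)`_m = (m == 0)%:R.
Proof.
move=> pZ; rewrite derivM derivX mul1r mulrDl coefD.
have -> : (psi * Z ^+ m.+1)`_m = (Z ^+ m)`_m.
  by rewrite exprS mulrA (eqmodX_mulr _ pZ) ?mul1r.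
case: m pZ => [|m] pZ; first by rewrite expr0 coefC -mulrA coefXM addr0.
rewrite -mulrA coefXM /=.
have := eqmodX_muln m.+1 (eqmodX_mulr (Z ^+ m) (eqmodX_deriv_inv pZ)) (ltnSn m).
have <- : (Z ^+ m.+1)^`() = Z^`() * Z ^+ m *+ m.+1 := deriv_exp Z m.+1.
have -> : - (Z ^+ 2 * psi^`()) * Z ^+ m = - (psi^`() * Z ^+ m.+2).
  by rewrite !exprS expr0; ring.
by rewrite coef_deriv !coefMn coefN => /mulrSnI ->; rewrite addNr.
Qed.

Lemma lagrange_monomial n j psi Z : psi * Z = 1 %[modX n.+1] ->
  (('X * psi) ^+ j * ('X * psi)^`() * Z ^+ n.+1)`_n = ('X^j)`_n.
Proof.
move=> pZ; rewrite coefXn; case: (ltnP n j) => [lt_nj|le_jn].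
  rewrite -mulrA coefM (ltn_eqF lt_nj) big1 // => i _.
  by rewrite coef_exp_lt ?mul0r ?coefXM // (leq_ltn_trans (leq_ord i)).
have -> : n.+1 = (j + (n - j).+1)%N by rewrite addnS subnKC.
set m := (n - j)%N; have le_mn : (m.+1 <= n.+1)%N by rewrite ltnS leq_subr.
have -> : ('X * psi) ^+ j * ('X * psi)^`() * Z ^+ (j + m.+1) =
    'X^j * ((psi * Z) ^+ j * (('X * psi)^`() * Z ^+ m.+1)).
  by rewrite !exprMn exprD; ring.
rewrite coefXnM ltnNge le_jn /= -/m.
rewrite (eqmodX_mulr _ (eqmodX_exp j (eqmodX_le le_mn pZ))) // expr1n mul1r.
rewrite lagrange_residue; last exact: eqmodX_le le_mn pZ.
by rewrite /m subn_eq0 eqn_leq le_jn andbT.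
Qed.

(* [x^n] H = [x^n] H(phi) phi' (X/phi)^{n+1} with phi = X psi, as Z = 1/psi = X/phi. *)
Lemma coef_lagrange n psi Z H : psi * Z = 1 %[modX n.+1] ->
  H`_n = ((H \Po ('X * psi)) * ('X * psi)^`() * Z ^+ n.+1)`_n.
Proof.
move=> pZ; rewrite comp_polyE !mulr_suml coef_sum -{1}(coefK H) poly_def coef_sum.
by apply: eq_bigr => j _; rewrite -!scalerAl !coefZ lagrange_monomial.
Qed.

(** * Exponential, binomial and logarithmic series *)

Definition exp_series K (c : F) : {poly F} := \poly_(i < K) (c ^+ i / i`!%:R).
(* (e^x - 1)/x, so that 'X * exprel_series K is e^x - 1. *)
Definition exprel_series K : {poly F} := \poly_(i < K) seq_invfact F i.
Definition binom_series K (v : F) : {poly F} := \poly_(i < K) gbinom v i.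

Lemma exp_series_deriv N K c : (N < K)%N ->
  (exp_series K c)^`() = c *: exp_series K c %[modX N].
Proof.
move=> lt_NK i lt_iN; have lt_iK : (i.+1 < K)%N by apply: leq_ltn_trans lt_NK.
rewrite coef_deriv coefZ !coef_poly lt_iK (ltnW lt_iK) factS natrM exprS.
by field; rewrite nat1r natf_neq0 natf_fact_neq0.
Qed.

Lemma exp_series0 K c : (0 < K)%N -> (exp_series K c)`_0 = 1.
Proof. by move=> K_gt0; rewrite coef_poly K_gt0 expr0 fact0 divr1. Qed.

Lemma seq_invfact0 : seq_invfact F 0 = 1.
Proof. by rewrite /seq_invfact factS fact0 invr1. Qed.

Lemma exprel_series0 K : (0 < K)%N -> (exprel_series K)`_0 = 1.
Proof. by move=> K_gt0; rewrite coef_poly K_gt0 seq_invfact0. Qed.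

Lemma deriv_X_exprel_series N K : (N <= K)%N ->
  ('X * exprel_series K)^`() = 1 + 'X * exprel_series K %[modX N].
Proof.
move=> le_NK [|i] lt_iN; rewrite coef_deriv coefD coefC !coefXM /=.
  by rewrite exprel_series0 ?addr0 // (leq_trans lt_iN).
have lt_iK : (i.+1 < K)%N by apply: leq_trans le_NK.
rewrite !coef_poly lt_iK (ltnW lt_iK) /seq_invfact add0r [i.+2`!]factS natrM.
by field; rewrite -natrD natf_fact_neq0 (natf_neq0 i.+1).
Qed.

Lemma deriv_comp_X_exprel_series N K f : (N <= K)%N ->
  (f \Po ('X * exprel_series K))^`() =
    (f^`() * (1 + 'X)) \Po ('X * exprel_series K) %[modX N].
Proof.
move=> le_NK; rewrite deriv_comp comp_polyM comp_polyD comp_polyX comp_polyC.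
exact/eqmodX_mull/deriv_X_exprel_series.
Qed.

Lemma gbinom0 (v : F) : gbinom v 0 = 1.
Proof. by rewrite /gbinom big_ord0 fact0 divr1. Qed.

Lemma gbinomS (v : F) i : gbinom v i.+1 * i.+1%:R = gbinom v i * (v - i%:R).
Proof.
rewrite /gbinom big_ord_recr /= factS natrM.
by field; rewrite nat1r natf_neq0 natf_fact_neq0.
Qed.

Lemma binom_series_deriv N K v : (N < K)%N ->
  (binom_series K v)^`() * (1 + 'X) = v *: binom_series K v %[modX N].
Proof.
move=> lt_NK i lt_iN; have lt_iK : (i.+1 < K)%N by apply: leq_ltn_trans lt_NK.
rewrite mulrDr mulr1 coefD coefMX !coef_deriv coefZ !coef_poly.
rewrite lt_iK (ltnW lt_iK) -mulr_natr gbinomS.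
case: i lt_iN lt_iK => [|i] _ lt_iK /=; first by rewrite addr0 subr0 mulrC.
by rewrite (ltnW lt_iK); ring.
Qed.

Lemma binom_series_comp N K v : (N < K)%N ->
  binom_series K v \Po ('X * exprel_series K) = exp_series K v %[modX N.+1].
Proof.
move=> lt_NK; have K_gt0 : (0 < K)%N by apply: leq_ltn_trans lt_NK.
apply: (@eqmodX_ode N v); last 1 first.
- by rewrite coef0_comp_poly ?coefXM // exp_series0 // coef_poly K_gt0 gbinom0.
- apply: (eqmodX_trans (deriv_comp_X_exprel_series _ (ltnW lt_NK))).
  by rewrite -comp_polyZ; apply/eqmodX_compl/binom_series_deriv; rewrite ?coefXM.
- exact: exp_series_deriv.
Qed.

(* log(1+x)/x, written with the sequence (1/2, 1/3, ...) of U. *)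
Definition log1p_quo_series r : {poly F} := 1 + (gseries (seq_inv F) r \Po - 'X).
Definition log1p_series r : {poly F} := 'X * log1p_quo_series r.

Lemma coef_log1p_quo_series r j : (log1p_quo_series r)`_j =
  if (j <= r)%N then (-1) ^+ j * seq_inv F j else 0.
Proof.
rewrite coefD coefC coef_comp_poly_NX coef_gseries.
case: j => [|j] /=; first by rewrite mulr0 expr0 mul1r /seq_inv invr1 addr0.
by case: ifP; rewrite ?mulr0 add0r.
Qed.

Lemma log1p_series_deriv r : (log1p_series r)^`() * (1 + 'X) = 1 %[modX r.+1].
Proof.
move=> i; rewrite ltnS => le_ir.
rewrite mulrDr mulr1 coefD coefMX !coef_deriv coefC coefXM /= coef_log1p_quo_series le_ir.
case: i le_ir => [|i] le_ir /=; first by rewrite expr0 mul1r /seq_inv invr1 addr0.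
rewrite coefXM /= coef_log1p_quo_series (ltnW le_ir) /seq_inv exprS.
by field; rewrite -natrD (natf_neq0 i.+1) nat1r natf_neq0.
Qed.

Lemma log1p_series_comp r K : (r < K)%N ->
  log1p_series r \Po ('X * exprel_series K) = 'X %[modX r.+2].
Proof.
move=> lt_rK; apply: eqmodX_deriv_uniq; last first.
  by rewrite coef0_comp_poly ?coefXM // coefX.
apply: (eqmodX_trans (deriv_comp_X_exprel_series _ lt_rK)).
rewrite derivX -[X in _ = X %[modX _]](rmorph1 (comp_poly ('X * exprel_series K))).
by apply/eqmodX_compl/log1p_series_deriv; rewrite coefXM.
Qed.

(** * The generating functions of U and Utilde *)

Definition fact_quo r k : F := (r + k)`!%:R / k`!%:R.

Lemma fact_quoS r k : fact_quo r k.+1 * k.+1%:R = fact_quo r k * (r.+1 + k)%:R.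
Proof.
rewrite /fact_quo addnS !factS !natrM addSn.
by field; rewrite nat1r natf_neq0 natf_fact_neq0.
Qed.

Lemma fact_quo_series_mul r :
  \poly_(k < r.+1) fact_quo r k * (1 - 'X) ^+ r.+1 = r`!%:R%:P %[modX r.+1].
Proof.
set P := \poly_(k < r.+1) fact_quo r k.
apply: eqmodX_deriv_uniq; last first.
  rewrite coef0M -[((1 - 'X) ^+ r.+1)`_0]horner_coef0 horner_exp !hornerE.
  by rewrite subr0 expr1n mulr1 coef_poly /fact_quo addn0 fact0 divr1 coefC.
rewrite derivC derivM deriv_exp derivB derivX -polyC1 derivC sub0r polyC1 /=.
set W := P^`() * (1 - 'X) - r.+1%:R *: P.
have -> : P^`() * (1 - 'X) ^+ r.+1 + P * (- 1 * (1 - 'X) ^+ r *+ r.+1) =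
    (1 - 'X) ^+ r * W.
  by rewrite /W exprS scaler_nat; ring.
rewrite -(mulr0 ((1 - 'X) ^+ r)); apply: eqmodX_mull => i lt_ir.
rewrite /W coefB coefZ mulrBr mulr1 coefB coefMX !coef_deriv coef0 !coef_poly.
rewrite !ltnS lt_ir (ltnW lt_ir) -[fact_quo r i.+1 *+ _]mulr_natr fact_quoS.
case: i lt_ir => [|i] lt_ir /=; first by rewrite subr0 addn0 mulrC subrr.
by rewrite (ltnW lt_ir); ring.
Qed.

Lemma fact_quo_sum_mul r G (al c : F) : G`_0 = 0 -> c != 0 ->
  (\sum_(k < r.+1) (al ^+ k / c ^+ (r + k).+1 * fact_quo r k) *: G ^+ k) *
    (c%:P - al *: G) ^+ r.+1 = r`!%:R%:P %[modX r.+1].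
Proof.
move=> G0 c_neq0; set q := (al / c) *: G.
have q0 : q`_0 = 0 by rewrite coefZ G0 mulr0.
have -> : \sum_(k < r.+1) (al ^+ k / c ^+ (r + k).+1 * fact_quo r k) *: G ^+ k =
    c^-1 ^+ r.+1 *: (\poly_(k < r.+1) fact_quo r k \Po q).
  rewrite poly_def rmorph_sum scaler_sumr; apply: eq_bigr => k _ /=.
  rewrite comp_polyZ comp_Xn_poly exprZn !scalerA; congr (_ *: _).
  by rewrite -exprVn exprMn -addSn exprD; ring.
have -> : c%:P - al *: G = c *: ((1 - 'X) \Po q).
  rewrite comp_polyB comp_polyX comp_polyC scalerBr scalerA mulrCA divff //.
  by rewrite mulr1 alg_polyC.
rewrite exprZn -scalerAl -scalerAr scalerA -exprMn mulVf // expr1n scale1r.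
rewrite -rmorphXn -comp_polyM -(comp_polyC (r`!%:R) q).
exact/eqmodX_compl/fact_quo_series_mul.
Qed.

Lemma Utilde_series s w v K : w != 1 -> (s < K)%N ->
  exists Y, Y * (w *: exprel_series K - 1) ^+ s.+1 = s`!%:R%:P %[modX s.+1] /\
    Utilde s w v = - (exp_series K v * Y)`_s.
Proof.
move=> w_neq1 lt_sK; have w1_neq0 : w - 1 != 0 by rewrite subr_eq0.
set G := gseries (seq_invfact F) s.
set Y := \sum_(k < s.+1) ((- w) ^+ k / (w - 1) ^+ (s + k).+1 * fact_quo s k) *: G ^+ k.
exists Y; split.
  apply: eqmodX_trans (fact_quo_sum_mul _ (coef0_gseries _ _) w1_neq0).
  apply/eqmodX_mull/eqmodX_exp => j le_js; rewrite scaleNr opprK.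
  rewrite coefB coefZ coefC coefD coefC coefZ coef_gseries coef_poly (leq_trans le_js lt_sK).
  case: j le_js => [|j] le_js /=; first by rewrite seq_invfact0 mulr1 mulr0 addr0.
  by rewrite subr0 add0r -ltnS le_js.
rewrite /Utilde coefMr big_mkord; congr (- _); apply: eq_bigr => m _.
by rewrite (sum_deMoivre _ _ (leq_ord m)) coef_poly (leq_ltn_trans (leq_subr m s) lt_sK).
Qed.

(* The sign (-1)^m in U is absorbed by evaluating at -X. *)
Lemma U_series r w v K : w != 1 -> (r < K)%N ->
  exists Y, Y * (w%:P - log1p_quo_series r) ^+ r.+1 = r`!%:R%:P %[modX r.+1] /\
    U r w v = kdelta r - w * (binom_series K v * Y)`_r.
Proof.
move=> w_neq1 lt_rK; have w1_neq0 : w - 1 != 0 by rewrite subr_eq0.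
set G := gseries (seq_inv F) r.
set Y := \sum_(k < r.+1) (1 ^+ k / (w - 1) ^+ (r + k).+1 * fact_quo r k) *: G ^+ k.
have NX0 : (- 'X : {poly F})`_0 = 0 by rewrite coefN coefX oppr0.
exists (Y \Po - 'X); split.
  have := eqmodX_compl NX0 (fact_quo_sum_mul (r := r) 1 (coef0_gseries (seq_inv F) r) w1_neq0).
  rewrite comp_polyM rmorphXn /= comp_polyB !comp_polyC comp_polyZ scale1r.
  by rewrite /log1p_quo_series polyCB polyC1 opprD addrA.
rewrite /U coefMr mulr_sumr big_mkord; congr (_ - _); apply: eq_bigr => m _.
rewrite (sum_deMoivre _ (fun k => w / (w - 1) ^+ (r + k).+1 * fact_quo r k) (leq_ord m)).
have -> : \sum_(k < r.+1) (w / (w - 1) ^+ (r + k).+1 * fact_quo r k) *: G ^+ k = w *: Y.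
  by rewrite scaler_sumr; apply: eq_bigr => k _; rewrite scalerA expr1n mul1r !mulrA.
rewrite coefZ coef_comp_poly_NX coef_poly (leq_ltn_trans (leq_subr m r) lt_rK).
ring.
Qed.

Lemma Utilde_inv s w v K Z : w != 1 -> (s < K)%N ->
  (w *: exprel_series K - 1) * Z = 1 %[modX s.+1] ->
  Utilde s w v = - (s`!%:R * (exp_series K v * Z ^+ s.+1)`_s).
Proof.
move=> w_neq1 lt_sK BZ; have [Y [BY ->]] := Utilde_series v w_neq1 lt_sK.
by rewrite (eqmodX_mull _ (eqmodX_mul_exp_inv BZ BY)) // -scalerAr coefZ.
Qed.

Lemma log1p_quo_series_comp r K w : (r < K)%N ->
  exprel_series K * ((w%:P - log1p_quo_series r) \Po ('X * exprel_series K)) =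
    w *: exprel_series K - 1 %[modX r.+1].
Proof.
move=> lt_rK; apply: eqmodX_mulXK; set phi := 'X * exprel_series K.
rewrite mulrA -/phi -{1}(comp_polyX phi) -comp_polyM mulrBr.
rewrite [_ * w%:P]mulrC mul_polyC comp_polyB comp_polyZ comp_polyX.
rewrite mulrBr mulr1 scalerAr.
exact/eqmodX_sub/log1p_series_comp.
Qed.

Lemma U_inv r w v K Z : w != 1 -> (r < K)%N ->
  (w *: exprel_series K - 1) * Z = 1 %[modX r.+1] ->
  U r w v = kdelta r -
    r`!%:R * (exp_series K v * Z ^+ r.+1 * (w *: ('X * exprel_series K)^`()))`_r.
Proof.
move=> w_neq1 lt_rK BZ.
set psi := exprel_series K; set phi := 'X * psi.
set Bl := w%:P - log1p_quo_series r.
have phi0 : phi`_0 = 0 by rewrite coefXM.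
have [Y [BlY ->]] := U_series v w_neq1 lt_rK.
have [Zl BlZl] : exists Zl, Bl * Zl = 1 %[modX r.+1].
  apply: eqmodX_inv_exists; rewrite unitfE coefB coefC coef_log1p_quo_series.
  by rewrite expr0 mul1r /seq_inv invr1 subr_eq0.
have [Zp psiZp] : exists Zp, psi * Zp = 1 %[modX r.+1].
  by apply: eqmodX_inv_exists; rewrite exprel_series0 ?unitr1 // (leq_ltn_trans _ lt_rK).
have ZlZp : (Zl \Po phi) * Zp = Z %[modX r.+1].
  apply: (eqmodX_inv_uniq _ BZ).
  apply: eqmodX_trans (eqmodX_mulr _ (eqmodX_sym (log1p_quo_series_comp w lt_rK))) _.
  have -> : psi * (Bl \Po phi) * ((Zl \Po phi) * Zp) = psi * Zp * ((Bl * Zl) \Po phi).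
    by rewrite comp_polyM; ring.
  have := eqmodX_mul psiZp (eqmodX_compl phi0 BlZl).
  by rewrite (rmorph1 (comp_poly phi)) mulr1.
rewrite (eqmodX_mull _ (eqmodX_mul_exp_inv BlZl BlY)) // -scalerAr coefZ.
rewrite (coef_lagrange (binom_series K v * Zl ^+ r.+1) psiZp) -/phi.
have -> : ((binom_series K v * Zl ^+ r.+1) \Po phi) * phi^`() * Zp ^+ r.+1 =
    (binom_series K v \Po phi) * ((Zl \Po phi) * Zp) ^+ r.+1 * phi^`().
  by rewrite comp_polyM rmorphXn /= exprMn; ring.
rewrite (eqmodX_mulr _ (eqmodX_mul (binom_series_comp v lt_rK) (eqmodX_exp _ ZlZp))) //.
by rewrite -scalerAr coefZ; ring.
Qed.

Lemma exprel_denom_inv_exists N K w : (0 < K)%N -> w != 1 ->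
  exists Z, (w *: exprel_series K - 1) * Z = 1 %[modX N].
Proof.
move=> K_gt0 w_neq1; apply: eqmodX_inv_exists.
by rewrite unitfE coefB coefZ coefC exprel_series0 // mulr1 subr_eq0.
Qed.

Lemma scale_deriv_X_exprel_series K w : w *: ('X * exprel_series K)^`() =
  (w *: exprel_series K - 1) + 1 + 'X * (w *: exprel_series K - 1)^`().
Proof.
rewrite derivM derivX mul1r derivB derivZ -polyC1 derivC subr0 polyC1 subrK.
by rewrite scalerDr scalerAr.
Qed.

Lemma U_sub_Utilde r w v K Z : w != 1 -> (r < K)%N ->
  (w *: exprel_series K - 1) * Z = 1 %[modX r.+1] ->
  U r w v = Utilde r w v + kdelta r - r`!%:R *
    ((exp_series K v * Z ^+ r)`_r +
     ('X * (exp_series K v * Z ^+ r.+1 * (w *: exprel_series K - 1)^`()))`_r).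
Proof.
move=> w_neq1 lt_rK BZ; rewrite (U_inv v w_neq1 lt_rK BZ) (Utilde_inv v w_neq1 lt_rK BZ).
rewrite scale_deriv_X_exprel_series.
set E := exp_series K v; set B := w *: exprel_series K - 1.
have -> : E * Z ^+ r.+1 * (B + 1 + 'X * B^`()) =
    E * Z ^+ r * (B * Z) + E * Z ^+ r.+1 + 'X * (E * Z ^+ r.+1 * B^`()).
  by rewrite exprSr; ring.
by rewrite !coefD (eqmodX_mull _ BZ) // mulr1; ring.
Qed.

Lemma U0_Utilde0 (w v : F) : w != 1 -> U 0 w v = Utilde 0 w v.
Proof.
move=> w_neq1; have [Z BZ] := exprel_denom_inv_exists 1 (ltn0Sn 0) w_neq1.
rewrite (U_sub_Utilde v w_neq1 (ltnSn 0) BZ) expr0 mulr1 exp_series0 //.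
by rewrite coefXM /kdelta /= fact0 mul1r addr0 addrK.
Qed.

Lemma U_Utilde_succ s (w v : F) : w != 1 ->
  U s.+1 w v = Utilde s.+1 w v + v * Utilde s w v.
Proof.
move=> w_neq1; have [Z BZ] := exprel_denom_inv_exists s.+2 (ltn0Sn s.+1) w_neq1.
rewrite (U_sub_Utilde v w_neq1 (ltnSn _) BZ).
rewrite (Utilde_inv v w_neq1 (ltnW (ltnSn _)) (eqmodX_le (leqnSn _) BZ)).
set E := exp_series s.+2 v; set B := w *: exprel_series s.+2 - 1.
have := eqmodX_deriv_mul_exp_inv s.+1 (exp_series_deriv v (ltnSn s.+1)) BZ (ltnSn s).
rewrite coef_deriv coefB coefZ coefMn coefXM /= => dEZ.
have -> : s.+1`!%:R * ((E * Z ^+ s.+1)`_s.+1 + (E * Z ^+ s.+2 * B^`())`_s) =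
    s`!%:R * ((E * Z ^+ s.+1)`_s.+1 *+ s.+1 + (E * Z ^+ s.+2 * B^`())`_s *+ s.+1).
  by rewrite factS natrM; ring.
by rewrite dEZ /kdelta /=; ring.
Qed.
End CharacteristicZero.

Theorem proposition6p4 (R : realType) (v w : R[i]) (hw : w != 1) :
  U 0 w v = Utilde 0 w v /\
  (forall r : nat, (1 <= r)%N -> U r w v = Utilde r w v + v * Utilde r.-1 w v).
Proof.
have char0 := @pchar_num R[i].
split; first exact: U0_Utilde0.
by case=> [//|s] _; exact: U_Utilde_succ.
Qed.
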